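(* Let $u$ be the solution of the Cauchy problem in the context and let $X(x,t)$ be the value at time $t$ of the solution of the quasispecies equation \[ \dot y=-\sigma y(1-y)+m_0f_0(1-y)-m_1f_1y,\qquad y(0)=x. \] Then $1\ge u(x,t)\ge X(x,t)$ for all $0\le x\le1$ and $t\ge0$.
   Context: Constants: $f_0>0$, $f_1\ge0$ with $\sigma=f_0-f_1>0$; $\lambda_0,\lambda_1\ge0$; $\gamma_0,\gamma_1\in(0,1]$; $m_0=\lambda_0\gamma_0$, $m_1=\lambda_1\gamma_1$. With $\mathcal{J}_0u(x,t)=u(x+\gamma_0(1-x),t)-u(x,t)$ and $\mathcal{J}_1u(x,t)=u(x-\gamma_1x,t)-u(x,t)$, $u$ is the unique (mild) solution, which is $C^\infty$ on $[0,1]\times[0,\infty)$, of \[ \partial_tu+\sigma(1-x)x\,\partial_xu=\lambda_0f_0\mathcal{J}_0u+\lambda_1f_1\mathcal{J}_1u\ (0\le x\le1,\ t>0),\quad u(x,0)=x. \] ($u(x,t)$ is the expected frequency of species 1 under rare mutations.) *)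

From Stdlib Require Import Reals.
From Coquelicot Require Import Coquelicot.
Open Scope R_scope.

Definition d_t (u : R -> R -> R) (x t : R) : R := Derive (fun s => u x s) t.
Definition d_x (u : R -> R -> R) (x t : R) : R := Derive (fun y => u y t) x.

Definition J0 (g0 : R) (u : R -> R -> R) (x t : R) : R :=
  u (x + g0 * (1 - x)) t - u x t.
Definition J1 (g1 : R) (u : R -> R -> R) (x t : R) : R :=
  u (x - g1 * x) t - u x t.

(* u is C^1 on the closed strip [0,1] x [0,oo): jointly continuous there,
   both partial derivatives exist there (for the function on R x R, i.e. for
   some extension) and are jointly continuous there. *)
Definition C1_on_strip (u : R -> R -> R) : Prop :=
  forall x t, 0 <= x <= 1 -> 0 <= t ->
    continuous (fun p : R * R => u (fst p) (snd p)) (x, t) /\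
    ex_derive (fun s => u x s) t /\
    ex_derive (fun y => u y t) x /\
    continuous (fun p : R * R => d_t u (fst p) (snd p)) (x, t) /\
    continuous (fun p : R * R => d_x u (fst p) (snd p)) (x, t).

Definition solves_cauchy (f0 f1 l0 l1 g0 g1 : R) (u : R -> R -> R) : Prop :=
  C1_on_strip u /\
  (forall x t, 0 <= x <= 1 -> 0 < t ->
     d_t u x t + (f0 - f1) * (1 - x) * x * d_x u x t
     = l0 * f0 * J0 g0 u x t + l1 * f1 * J1 g1 u x t) /\
  (forall x, 0 <= x <= 1 -> u x 0 = x).

(* Right-hand side of the quasispecies equation, with sigma = f0 - f1,
   m0 = l0 g0, m1 = l1 g1. *)
Definition qs_rhs (f0 f1 l0 l1 g0 g1 : R) (y : R) : R :=
  - (f0 - f1) * y * (1 - y) + (l0 * g0) * f0 * (1 - y) - (l1 * g1) * f1 * y.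

Definition solves_quasispecies (f0 f1 l0 l1 g0 g1 : R) (X : R -> R -> R) : Prop :=
  forall x, 0 <= x <= 1 ->
    X x 0 = x /\
    forall t, 0 <= t -> is_derive (X x) t (qs_rhs f0 f1 l0 l1 g0 g1 (X x t)).

From Stdlib Require Import Reals Lra Psatz ClassicalEpsilon.
From Coquelicot Require Import Coquelicot.
Open Scope R_scope.

(** Both bounds are comparisons for the linear nonlocal operator
    [L = d_t + sigma (1 - x) x d_x - lambda_0 f_0 J_0 - lambda_1 f_1 J_1], for which
    [L u = 0].  A minimum principle holds for [L]: at a negative minimum of
    [w + eps (1 + t)] over [0,1] x [0,T] the time derivative is negative, the
    transport term vanishes (interior minimum, or [x (1 - x) = 0]) and the jump terms
    are nonnegative; hence [L v <= L w] and [v <= w] at [t = 0] give [v <= w].  The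
    upper bound compares [u] with the constant [1].  For the lower bound, the
    quasispecies equation [y' = F(y)] is a Riccati equation whose flow [phi(x,t)] is
    an explicit Moebius transformation of [x]; being a flow it satisfies
    [d_t phi = F(x) d_x phi], it is convex in [x], and
    [F(x) + sigma (1 - x) x - m_0 f_0 (1 - x) + m_1 f_1 x = 0] identically, so
    bounding the jumps below by their linearisation gives [L phi <= 0].  Finally
    [X = phi] by uniqueness for the Riccati ODE. *)

Definition continuous2 (f : R -> R -> R) (x t : R) : Prop :=
  continuous (fun p : R * R => f (fst p) (snd p)) (x, t).

Lemma continuous2_eps_delta (f : R -> R -> R) (x t : R) :
  continuous2 f x t -> forall eps, 0 < eps ->
  exists d, 0 < d /\ forall y s, Rabs (y - x) < d -> Rabs (s - t) < d ->
    Rabs (f y s - f x t) < eps.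
Proof.
  intros Hf eps Heps.
  destruct (proj1 (filterlim_locally _ _) Hf (mkposreal eps Heps)) as [d Hd].
  exists d; split; [apply cond_pos|].
  intros y s Hy Hs. apply (Hd (y, s)). split; assumption.
Qed.

Lemma continuous2_plus (f g : R -> R -> R) (x t : R) :
  continuous2 f x t -> continuous2 g x t ->
  continuous2 (fun x t => f x t + g x t) x t.
Proof.
  exact (continuous_plus (fun p : R * R => f (fst p) (snd p))
                         (fun p : R * R => g (fst p) (snd p)) (x, t)).
Qed.

Lemma continuous2_minus (f g : R -> R -> R) (x t : R) :
  continuous2 f x t -> continuous2 g x t ->
  continuous2 (fun x t => f x t - g x t) x t.
Proof.
  exact (continuous_minus (fun p : R * R => f (fst p) (snd p))
                          (fun p : R * R => g (fst p) (snd p)) (x, t)).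
Qed.

Lemma continuous2_mult (f g : R -> R -> R) (x t : R) :
  continuous2 f x t -> continuous2 g x t ->
  continuous2 (fun x t => f x t * g x t) x t.
Proof.
  exact (continuous_mult (fun p : R * R => f (fst p) (snd p))
                         (fun p : R * R => g (fst p) (snd p)) (x, t)).
Qed.

Lemma continuous2_div (f g : R -> R -> R) (x t : R) :
  continuous2 f x t -> continuous2 g x t -> g x t <> 0 ->
  continuous2 (fun x t => f x t / g x t) x t.
Proof.
  intros Hf Hg Hg0.
  apply (continuous_mult (fun p : R * R => f (fst p) (snd p))
                         (fun p : R * R => / g (fst p) (snd p))); [exact Hf|].
  apply (continuous_comp (fun p : R * R => g (fst p) (snd p)) Rinv); [exact Hg|].
  apply continuous_Rinv, Hg0.
Qed.

Lemma continuous2_fst (x t : R) : continuous2 (fun x _ => x) x t.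
Proof. apply continuous_fst. Qed.

Lemma continuous2_time (g : R -> R) (x t : R) :
  continuous g t -> continuous2 (fun _ t => g t) x t.
Proof.
  intros Hg. apply (continuous_comp (fun p : R * R => snd p) g); [apply continuous_snd|exact Hg].
Qed.

Lemma continuity_pt_eps_delta (f : R -> R) (x : R) :
  (forall eps, 0 < eps -> exists d, 0 < d /\
     forall y, Rabs (y - x) < d -> Rabs (f y - f x) < eps) ->
  continuity_pt f x.
Proof.
  intros H eps Heps. destruct (H eps Heps) as [d [Hd Hf]].
  exists d; split; [exact Hd|]. intros y [_ Hy]. apply Hf, Hy.
Qed.

Lemma continuity_pt_space (f : R -> R -> R) (x t : R) :
  continuous2 f x t -> continuity_pt (fun y => f y t) x.
Proof.
  intros Hf. apply continuity_pt_eps_delta. intros eps Heps.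
  destruct (continuous2_eps_delta f x t Hf eps Heps) as [d [Hd Hfd]].
  exists d; split; [exact Hd|]. intros y Hy.
  apply Hfd; [exact Hy|]. rewrite Rminus_diag, Rabs_R0. exact Hd.
Qed.

Lemma continuous2_time_Rmax0 (f : R -> R -> R) (x t : R) :
  continuous2 f x (Rmax 0 t) -> continuous2 (fun x t => f x (Rmax 0 t)) x t.
Proof.
  intros Hf.
  assert (Hmax : continuous (Rmax 0) t).
  { apply continuity_pt_filterlim, continuity_pt_eps_delta. intros eps Heps.
    exists eps; split; [exact Heps|]. intros y Hy.
    unfold Rmax in *. destruct (Rle_dec 0 y), (Rle_dec 0 t);
      unfold Rabs in *; repeat destruct Rcase_abs; lra. }
  apply (continuous_comp_2 (fun p : R * R => fst p) (fun p : R * R => Rmax 0 (snd p)) f);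
    [apply continuous_fst| |exact Hf].
  apply (continuous_comp (fun p : R * R => snd p) (Rmax 0)); [apply continuous_snd|exact Hmax].
Qed.

Lemma is_derive_nonpos_at_left_min (g : R -> R) (a t l : R) :
  is_derive g t l -> a < t -> (forall s, a <= s <= t -> g t <= g s) -> l <= 0.
Proof.
  intros Hg Hat Hmin.
  apply Rnot_lt_le; intro Hl.
  destruct (proj1 (is_derive_Reals g t l) Hg l Hl) as [d Hd].
  set (h := - Rmin (d / 2) (t - a)).
  assert (Hd0 : 0 < d) by apply cond_pos.
  assert (Hh : 0 < - h <= d / 2 /\ - h <= t - a).
  { unfold h. rewrite Ropp_involutive. split; [split|].
    - apply Rmin_pos; lra.
    - apply Rmin_l.
    - apply Rmin_r. }
  assert (Hquot : (g (t + h) - g t) / h <= 0).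
  { assert (g t <= g (t + h)) by (apply Hmin; lra).
    assert (/ h < 0) by (apply Rinv_lt_0_compat; lra).
    unfold Rdiv. nra. }
  assert (Hh0 : h <> 0) by lra.
  assert (Hhd : Rabs h < d) by (rewrite Rabs_left; lra).
  specialize (Hd h Hh0 Hhd). apply Rabs_def2 in Hd. lra.
Qed.

Lemma interval_uniform_radius (a b : R) (Q : R -> R -> Prop) : a <= b ->
  (forall x, a <= x <= b -> exists d, 0 < d /\
     forall y s, Rabs (y - x) < d -> Rabs s < d -> Q y s) ->
  exists d, 0 < d /\ forall y s, a <= y <= b -> Rabs s < d -> Q y s.
Proof.
  intros Hab Hloc.
  set (E := fun c => a <= c <= b /\ exists d, 0 < d /\
              forall y s, a <= y <= c -> Rabs s < d -> Q y s).
  assert (HEa : E a).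
  { destruct (Hloc a) as [d [Hd Hq]]; [lra|].
    split; [lra|]. exists d; split; [exact Hd|].
    intros y s Hy Hs. apply Hq; [|exact Hs].
    replace (y - a) with 0 by lra. rewrite Rabs_R0. exact Hd. }
  destruct (completeness E) as [c [Hub Hlub]].
  { exists b. intros z [Hz _]. lra. }
  { exists a. exact HEa. }
  assert (Hc : a <= c <= b).
  { split; [apply Hub, HEa|]. apply Hlub. intros z [Hz _]. lra. }
  destruct (Hloc c Hc) as [dc [Hdc Hqc]].
  assert (Hnear : exists e, E e /\ c - dc < e).
  { apply NNPP. intro Hno.
    assert (c <= c - dc); [|lra].
    apply Hlub. intros z Hz. apply Rnot_lt_le. intro Hlt. apply Hno. exists z. split; assumption. }
  destruct Hnear as [e [[He [de [Hde Hqe]]] Hce]].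
  set (e' := Rmin b (c + dc / 2)).
  assert (He'1 : e' <= c + dc / 2) by apply Rmin_r.
  assert (HEe' : E e').
  { split; [split; [apply Rmin_glb; lra|apply Rmin_l]|].
    exists (Rmin de dc). split; [apply Rmin_pos; lra|].
    intros y s Hy Hs.
    pose proof (Rmin_l de dc). pose proof (Rmin_r de dc).
    destruct (Rle_or_lt y e) as [Hye|Hye].
    - apply Hqe; lra.
    - apply Hqc; [apply Rabs_def1|]; lra. }
  assert (He'b : e' = b).
  { assert (e' <= c) by apply Hub, HEe'.
    unfold e' in *. unfold Rmin in *. destruct (Rle_dec b (c + dc / 2)); lra. }
  rewrite He'b in HEe'. destruct HEe' as [_ Huniform]. exact Huniform.
Qed.

Lemma lower_bound_near_time (v : R -> R -> R) (t L eps : R) :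
  (forall x, 0 <= x <= 1 -> continuous2 v x t) ->
  (forall x, 0 <= x <= 1 -> L <= v x t) -> 0 < eps ->
  exists d, 0 < d /\ forall y s, 0 <= y <= 1 -> Rabs (s - t) < d -> L - eps < v y s.
Proof.
  intros Hc HL Heps.
  destruct (interval_uniform_radius 0 1 (fun y s => L - eps < v y (t + s)))
    as [d [Hd Hq]]; [lra| |].
  - intros x Hx. destruct (continuous2_eps_delta v x t (Hc x Hx) eps Heps) as [d [Hd Hq]].
    exists d; split; [exact Hd|]. intros y s Hy Hs.
    assert (Hts : Rabs (t + s - t) < d) by (replace (t + s - t) with s by ring; exact Hs).
    specialize (Hq y (t + s) Hy Hts). specialize (HL x Hx).
    apply Rabs_def2 in Hq. lra.
  - exists d; split; [exact Hd|]. intros y s Hy Hs.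
    replace s with (t + (s - t)) by ring. apply Hq; assumption.
Qed.

Lemma continuity_pt_space_min (v : R -> R -> R) (xm : R -> R) (t : R) :
  (forall x, 0 <= x <= 1 -> continuous2 v x t) ->
  (forall s, 0 <= xm s <= 1 /\ forall y, 0 <= y <= 1 -> v (xm s) s <= v y s) ->
  continuity_pt (fun s => v (xm s) s) t.
Proof.
  intros Hc Hxm. apply continuity_pt_eps_delta. intros eps Heps.
  destruct (Hxm t) as [Hxt Hmint].
  destruct (lower_bound_near_time v t (v (xm t) t) eps Hc Hmint Heps) as [d1 [Hd1 Hlow]].
  destruct (continuous2_eps_delta v (xm t) t (Hc _ Hxt) eps Heps) as [d2 [Hd2 Hup]].
  exists (Rmin d1 d2); split; [apply Rmin_pos; assumption|].
  intros s Hs. destruct (Hxm s) as [Hxs Hmins].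
  pose proof (Rmin_l d1 d2). pose proof (Rmin_r d1 d2).
  specialize (Hlow (xm s) s Hxs ltac:(lra)).
  specialize (Hmins (xm t) Hxt).
  specialize (Hup (xm t) s ltac:(rewrite Rminus_diag, Rabs_R0; lra) ltac:(lra)).
  apply Rabs_def2 in Hup. apply Rabs_def1; lra.
Qed.

Lemma strip_min (v : R -> R -> R) (T : R) : 0 <= T ->
  (forall x t, 0 <= x <= 1 -> 0 <= t -> continuous2 v x t) ->
  exists xs ts, 0 <= xs <= 1 /\ 0 <= ts <= T /\
    forall x t, 0 <= x <= 1 -> 0 <= t <= T -> v xs ts <= v x t.
Proof.
  intros HT Hc.
  (* [continuity_ab_min] needs two-sided continuity at [t = 0]: extend [v] constantly to [t < 0] *)
  set (w := fun x t => v x (Rmax 0 t)).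
  assert (Hw : forall x t, 0 <= x <= 1 -> continuous2 w x t).
  { intros x t Hx. apply continuous2_time_Rmax0, Hc; [exact Hx|apply Rmax_l]. }
  destruct (choice (fun t x => 0 <= x <= 1 /\ forall y, 0 <= y <= 1 -> w x t <= w y t))
    as [xm Hxm].
  { intros t.
    destruct (continuity_ab_min (fun y => w y t) 0 1) as [x [Hmin Hx]]; [lra| |].
    - intros y Hy. apply continuity_pt_space, Hw, Hy.
    - exists x. split; [exact Hx|]. intros y Hy. apply Hmin, Hy. }
  destruct (continuity_ab_min (fun t => w (xm t) t) 0 T HT) as [ts [Hmin Hts]].
  { intros t _. apply continuity_pt_space_min; [|exact Hxm]. intros x Hx. apply Hw, Hx. }
  exists (xm ts), ts. split; [apply Hxm|]. split; [exact Hts|].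
  intros x t Hx Ht.
  specialize (Hmin t Ht). destruct (Hxm t) as [_ Hmint]. specialize (Hmint x Hx).
  unfold w in *. rewrite (Rmax_right 0 ts), (Rmax_right 0 t) in Hmin by lra.
  rewrite (Rmax_right 0 t) in Hmint by lra. lra.
Qed.

Definition Lop (sg a0 a1 g0 g1 : R) (w : R -> R -> R) (x t : R) : R :=
  d_t w x t + sg * (1 - x) * x * d_x w x t - a0 * J0 g0 w x t - a1 * J1 g1 w x t.

Lemma Lop_minus sg a0 a1 g0 g1 (v w : R -> R -> R) (x t : R) :
  ex_derive (fun s => v x s) t -> ex_derive (fun s => w x s) t ->
  ex_derive (fun y => v y t) x -> ex_derive (fun y => w y t) x ->
  Lop sg a0 a1 g0 g1 (fun x t => v x t - w x t) x t
  = Lop sg a0 a1 g0 g1 v x t - Lop sg a0 a1 g0 g1 w x t.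
Proof.
  intros Hvt Hwt Hvx Hwx.
  assert (Hdt : d_t (fun x t => v x t - w x t) x t = d_t v x t - d_t w x t)
    by (apply Derive_minus; assumption).
  assert (Hdx : d_x (fun x t => v x t - w x t) x t = d_x v x t - d_x w x t)
    by (apply Derive_minus; assumption).
  unfold Lop. rewrite Hdt, Hdx. unfold J0, J1. ring.
Qed.

Lemma Lop_const sg a0 a1 g0 g1 (c x t : R) : Lop sg a0 a1 g0 g1 (fun _ _ => c) x t = 0.
Proof. unfold Lop, d_t, d_x, J0, J1. rewrite !Derive_const. ring. Qed.

Lemma Lop_le_d_t_at_space_min sg a0 a1 g0 g1 (w : R -> R -> R) (xs t : R) :
  0 <= a0 -> 0 <= a1 -> 0 <= g0 <= 1 -> 0 <= g1 <= 1 -> 0 <= xs <= 1 ->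
  ex_derive (fun y => w y t) xs ->
  (forall y, 0 <= y <= 1 -> w xs t <= w y t) ->
  Lop sg a0 a1 g0 g1 w xs t <= d_t w xs t.
Proof.
  intros Ha0 Ha1 Hg0 Hg1 Hxs Hdx Hmin.
  assert (Htransport : (1 - xs) * xs * d_x w xs t = 0).
  { destruct (Req_dec xs 0) as [->|Hxs0]; [ring|].
    destruct (Req_dec xs 1) as [->|Hxs1]; [ring|].
    assert (Hflat : d_x w xs t = 0).
    { pose proof (ex_derive_Reals_0 _ _ Hdx) as pr.
      rewrite <- (deriv_minimum (fun y => w y t) 0 1 xs pr); [| lra | lra |].
      - apply eq_sym, derive_pt_eq_0, is_derive_Reals, Derive_correct, Hdx.
      - intros y Hy0 Hy1. apply Hmin. lra. }
    rewrite Hflat. ring. }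
  assert (Hjump0 : 0 <= J0 g0 w xs t).
  { assert (w xs t <= w (xs + g0 * (1 - xs)) t) by (apply Hmin; nra). unfold J0. lra. }
  assert (Hjump1 : 0 <= J1 g1 w xs t).
  { assert (w xs t <= w (xs - g1 * xs) t) by (apply Hmin; nra). unfold J1. lra. }
  unfold Lop.
  replace (sg * (1 - xs) * xs * d_x w xs t) with (sg * ((1 - xs) * xs * d_x w xs t)) by ring.
  rewrite Htransport. nra.
Qed.

Definition strip_regular (w : R -> R -> R) : Prop :=
  forall x t, 0 <= x <= 1 -> 0 <= t ->
    continuous2 w x t /\ ex_derive (fun s => w x s) t /\ ex_derive (fun y => w y t) x.

Lemma strip_regular_of_C1 (w : R -> R -> R) : C1_on_strip w -> strip_regular w.
Proof.
  intros Hw x t Hx Ht. destruct (Hw x t Hx Ht) as [Hc [Hdt [Hdx _]]]. auto.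
Qed.

Lemma minimum_principle sg a0 a1 g0 g1 (w : R -> R -> R) :
  0 <= a0 -> 0 <= a1 -> 0 <= g0 <= 1 -> 0 <= g1 <= 1 -> strip_regular w ->
  (forall x t, 0 <= x <= 1 -> 0 < t -> 0 <= Lop sg a0 a1 g0 g1 w x t) ->
  (forall x, 0 <= x <= 1 -> 0 <= w x 0) ->
  forall x t, 0 <= x <= 1 -> 0 <= t -> 0 <= w x t.
Proof.
  intros Ha0 Ha1 Hg0 Hg1 Hreg HL Hinit x0 t0 Hx0 Ht0.
  apply Rnot_lt_le. intro Hneg.
  set (eps := - w x0 t0 / (2 * (1 + t0))).
  assert (Heps : 0 < eps) by (unfold eps; apply Rdiv_lt_0_compat; lra).
  set (v := fun x t => w x t + eps * (1 + t)).
  destruct (strip_min v t0 Ht0) as [xs [ts [Hxs [Hts Hmin]]]].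
  { intros x t Hx Ht. apply continuous2_plus; [apply Hreg; assumption|].
    apply continuous2_time. apply (ex_derive_continuous (fun s => eps * (1 + s))).
    auto_derive. exact I. }
  assert (Hvs : v xs ts < 0).
  { specialize (Hmin x0 t0 Hx0 ltac:(lra)). unfold v, eps in *.
    replace (- w x0 t0 / (2 * (1 + t0)) * (1 + t0)) with (- w x0 t0 / 2) in Hmin
      by (field; lra).
    lra. }
  assert (Hts0 : 0 < ts).
  { destruct (proj1 Hts) as [|<-]; [assumption|].
    specialize (Hinit xs Hxs). unfold v in Hvs. nra. }
  destruct (Hreg xs ts Hxs (proj1 Hts)) as [_ [Hdt Hdx]].
  assert (Htime : d_t w xs ts + eps <= 0).
  { apply (is_derive_nonpos_at_left_min (fun s => v xs s) 0 ts); [|exact Hts0|].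
    - apply (is_derive_plus (fun s => w xs s) (fun s => eps * (1 + s))).
      + apply Derive_correct, Hdt.
      + auto_derive; [exact I|ring].
    - intros s Hs. apply Hmin; lra. }
  assert (Hspace : Lop sg a0 a1 g0 g1 w xs ts <= d_t w xs ts).
  { apply Lop_le_d_t_at_space_min; try assumption.
    intros y Hy. specialize (Hmin y ts Hy Hts). unfold v in Hmin. lra. }
  specialize (HL xs ts Hxs Hts0). lra.
Qed.

Lemma comparison_principle sg a0 a1 g0 g1 (v w : R -> R -> R) :
  0 <= a0 -> 0 <= a1 -> 0 <= g0 <= 1 -> 0 <= g1 <= 1 ->
  strip_regular v -> strip_regular w ->
  (forall x t, 0 <= x <= 1 -> 0 < t -> Lop sg a0 a1 g0 g1 v x t <= Lop sg a0 a1 g0 g1 w x t) ->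
  (forall x, 0 <= x <= 1 -> v x 0 <= w x 0) ->
  forall x t, 0 <= x <= 1 -> 0 <= t -> v x t <= w x t.
Proof.
  intros Ha0 Ha1 Hg0 Hg1 Hv Hw HL Hinit x t Hx Ht.
  apply Rminus_le_0.
  apply (minimum_principle sg a0 a1 g0 g1 (fun x t => w x t - v x t)); try assumption.
  - intros y s Hy Hs.
    destruct (Hv y s Hy Hs) as [Hvc [Hvt Hvx]]. destruct (Hw y s Hy Hs) as [Hwc [Hwt Hwx]].
    split; [apply continuous2_minus; assumption|].
    split.
    + apply (ex_derive_minus (fun s => w y s) (fun s => v y s)); assumption.
    + apply (ex_derive_minus (fun x => w x s) (fun x => v x s)); assumption.
  - intros y s Hy Hs.
    destruct (Hv y s Hy ltac:(lra)) as [_ [Hvt Hvx]].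
    destruct (Hw y s Hy ltac:(lra)) as [_ [Hwt Hwx]].
    rewrite Lop_minus by assumption. specialize (HL y s Hy Hs). lra.
  - intros y Hy. specialize (Hinit y Hy). lra.
Qed.

Definition riccati_rhs (sg a b y : R) : R := - sg * y * (1 - y) + a * (1 - y) - b * y.

Definition riccati_disc (sg a b : R) : R := ((sg + a + b) / 2) ^ 2 - sg * a.

Lemma riccati_disc_nonneg sg a b : 0 <= sg -> 0 <= a -> 0 <= b -> 0 <= riccati_disc sg a b.
Proof.
  intros Hsg Ha Hb. unfold riccati_disc.
  replace (((sg + a + b) / 2) ^ 2 - sg * a) with (((sg - a) / 2) ^ 2 + b * (2 * sg + 2 * a + b) / 4)
    by field.
  assert (0 <= b * (2 * sg + 2 * a + b)) by (apply Rmult_le_pos; lra).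
  pose proof (pow2_ge_0 ((sg - a) / 2)). lra.
Qed.

Lemma hyperbolic_pair_exists (q : R) : 0 <= q -> exists C S : R -> R,
  C 0 = 1 /\ S 0 = 0 /\
  (forall t, is_derive C t (q * S t)) /\ (forall t, is_derive S t (C t)) /\
  (forall t, C t ^ 2 - q * S t ^ 2 = 1) /\
  (forall t, 0 <= t -> 0 <= S t /\ 0 < C t).
Proof.
  intros Hq. destruct (Rle_lt_or_eq_dec 0 q Hq) as [Hq0|<-].
  - set (w := sqrt q).
    assert (Hw : 0 < w) by (apply sqrt_lt_R0, Hq0).
    assert (Hww : w * w = q) by (apply sqrt_sqrt, Hq).
    exists (fun t => (exp (w * t) + exp (- (w * t))) / 2),
           (fun t => (exp (w * t) - exp (- (w * t))) / (2 * w)).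
    assert (Hinv : forall t, exp (w * t) * exp (- (w * t)) = 1).
    { intros t. rewrite <- exp_plus, Rplus_opp_r. apply exp_0. }
    split; [|split; [|split; [|split; [|split]]]].
    + rewrite Rmult_0_r, Ropp_0, exp_0. field.
    + rewrite Rmult_0_r, Ropp_0, exp_0. field. lra.
    + intros t. auto_derive; [exact I|]. rewrite <- Hww. field. lra.
    + intros t. auto_derive; [exact I|]. field. lra.
    + intros t. rewrite <- Hww, <- (Hinv t). field. lra.
    + intros t Ht.
      assert (exp (- (w * t)) <= exp (w * t)).
      { destruct (Rle_lt_or_eq_dec 0 t Ht) as [Ht0|<-].
        - left. apply exp_increasing. nra.
        - rewrite Rmult_0_r, Ropp_0. lra. }
      pose proof (exp_pos (w * t)). pose proof (exp_pos (- (w * t))).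
      split; [apply Rmult_le_pos; [lra|]; left; apply Rinv_0_lt_compat; lra|lra].
  - exists (fun _ => 1), (fun t => t).
    split; [|split; [|split; [|split; [|split]]]]; try reflexivity.
    + intros t. auto_derive; [exact I|ring].
    + intros t. auto_derive; [exact I|ring].
    + intros t. ring.
    + intros t Ht. lra.
Qed.

Section RiccatiFlow.

Variables (sg a b : R) (C S : R -> R).

Definition riccati_den (x t : R) : R := C t + (sg + a + b) / 2 * S t - x * (sg * S t).

(* The flow of [y' = riccati_rhs sg a b y] is the Moebius map of [x] with matrix
   [C t * I + S t * [[-(sg+a+b)/2, a], [-sg, (sg+a+b)/2]]], of determinant
   [C t ^ 2 - riccati_disc sg a b * S t ^ 2 = 1]. *)
Definition riccati_flow (x t : R) : R :=
  (a * S t + x * (C t - (sg + a + b) / 2 * S t)) / riccati_den x t.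

Hypothesis HC : forall t, is_derive C t (riccati_disc sg a b * S t).
Hypothesis HS : forall t, is_derive S t (C t).
Hypothesis Hdet : forall t, C t ^ 2 - riccati_disc sg a b * S t ^ 2 = 1.

Lemma riccati_flow_initial (x : R) : C 0 = 1 -> S 0 = 0 -> riccati_flow x 0 = x.
Proof. intros HC0 HS0. unfold riccati_flow, riccati_den. rewrite HC0, HS0. field. Qed.

Lemma riccati_den_pos (x t : R) : 0 <= sg -> 0 <= b -> 0 <= S t -> 0 < C t -> 0 <= x <= 1 ->
  0 < riccati_den x t.
Proof.
  intros Hsg Hb HSt HCt Hx. unfold riccati_den.
  set (K := x * sg - (sg + a + b) / 2).
  replace (C t + (sg + a + b) / 2 * S t - x * (sg * S t)) with (C t - K * S t)
    by (unfold K; ring).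
  destruct (Rle_or_lt K 0) as [HK|HK]; [nra|].
  assert (HKdisc : K ^ 2 <= riccati_disc sg a b).
  { assert (K <= (sg - a - b) / 2) by (unfold K; nra).
    unfold riccati_disc. nra. }
  assert (HKS : (K * S t) ^ 2 < C t ^ 2).
  { specialize (Hdet t). nra. }
  nra.
Qed.

Lemma riccati_flow_dx (x t : R) : riccati_den x t <> 0 ->
  is_derive (fun y => riccati_flow y t) x (/ riccati_den x t ^ 2).
Proof.
  intros Hden. rewrite <- (Rmult_1_l (/ riccati_den x t ^ 2)), <- (Hdet t).
  unfold riccati_flow, riccati_den in *.
  auto_derive; [exact Hden|]. unfold riccati_disc. field; lra.
Qed.

Lemma riccati_flow_dt (x t : R) : riccati_den x t <> 0 ->
  is_derive (fun s => riccati_flow x s) t (riccati_rhs sg a b x / riccati_den x t ^ 2).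
Proof.
  intros Hden. rewrite <- (Rmult_1_r (riccati_rhs sg a b x)), <- (Hdet t).
  unfold riccati_flow, riccati_den in *.
  auto_derive.
  - repeat split; try (exists (C t); apply HS); try (eexists; apply HC).
    intro Hzero. apply Hden. lra.
  - replace (Derive (fun s : R => C s) t) with (riccati_disc sg a b * S t)
      by (symmetry; apply is_derive_unique, HC).
    replace (Derive (fun s : R => S s) t) with (C t) by (symmetry; apply is_derive_unique, HS).
    unfold riccati_rhs, riccati_disc. field; lra.
Qed.

Lemma riccati_flow_rhs (x t : R) : riccati_den x t <> 0 ->
  riccati_rhs sg a b x / riccati_den x t ^ 2 = riccati_rhs sg a b (riccati_flow x t).
Proof.
  intros Hden. unfold riccati_flow, riccati_den in *.
  rewrite <- (Rmult_1_r (riccati_rhs sg a b x)), <- (Hdet t).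
  unfold riccati_rhs, riccati_disc. field; lra.
Qed.

Lemma riccati_flow_solves (x t : R) : riccati_den x t <> 0 ->
  is_derive (fun s => riccati_flow x s) t (riccati_rhs sg a b (riccati_flow x t)).
Proof. intros Hden. rewrite <- riccati_flow_rhs by exact Hden. apply riccati_flow_dt, Hden. Qed.

Lemma riccati_flow_convex (x y t : R) : 0 <= sg * S t ->
  0 < riccati_den x t -> 0 < riccati_den y t ->
  (y - x) / riccati_den x t ^ 2 <= riccati_flow y t - riccati_flow x t.
Proof.
  intros HsgS Hx Hy.
  assert (Hgap : riccati_flow y t - riccati_flow x t - (y - x) / riccati_den x t ^ 2
                 = sg * S t * (y - x) ^ 2 / (riccati_den y t * riccati_den x t ^ 2)).
  { assert (Hdiff : riccati_flow y t - riccati_flow x t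
                   = (y - x) * (C t ^ 2 - riccati_disc sg a b * S t ^ 2)
                     / (riccati_den x t * riccati_den y t)).
    { unfold riccati_flow, riccati_den, riccati_disc in *. field. lra. }
    rewrite Hdiff, Hdet. unfold riccati_den in *. field. lra. }
  assert (0 <= sg * S t * (y - x) ^ 2 / (riccati_den y t * riccati_den x t ^ 2)).
  { apply Rdiv_le_0_compat; [|apply Rmult_lt_0_compat; [exact Hy|apply pow_lt, Hx]].
    apply Rmult_le_pos; [exact HsgS|apply pow2_ge_0]. }
  lra.
Qed.

Lemma riccati_flow_continuous (x t : R) : riccati_den x t <> 0 ->
  continuous2 riccati_flow x t.
Proof.
  intros Hden.
  assert (Htime : forall g : R -> R, ex_derive g t -> continuous2 (fun _ s => g s) x t).
  { intros g Hg. apply continuous2_time, (ex_derive_continuous g), Hg. }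
  assert (HCd : ex_derive C t) by (eexists; apply HC).
  assert (HSd : ex_derive S t) by (eexists; apply HS).
  unfold riccati_flow, riccati_den.
  apply continuous2_div; [| |exact Hden].
  - apply continuous2_plus; [|apply continuous2_mult; [apply continuous2_fst|]];
      apply Htime; auto_derive; tauto.
  - apply continuous2_minus; [|apply continuous2_mult; [apply continuous2_fst|]];
      apply Htime; auto_derive; tauto.
Qed.

Lemma riccati_flow_strip_regular : 0 <= sg -> 0 <= b ->
  (forall t, 0 <= t -> 0 <= S t /\ 0 < C t) -> strip_regular riccati_flow.
Proof.
  intros Hsg Hb Hpos x t Hx Ht. destruct (Hpos t Ht) as [HSt HCt].
  assert (Hden : riccati_den x t <> 0) by (apply Rgt_not_eq, riccati_den_pos; assumption).
  split; [apply riccati_flow_continuous, Hden|].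
  split; eexists; [apply riccati_flow_dt|apply riccati_flow_dx]; exact Hden.
Qed.

Lemma Lop_riccati_flow_nonpos (a0 a1 g0 g1 x t : R) :
  0 <= sg -> 0 <= b -> 0 <= a0 -> 0 <= a1 -> 0 <= g0 <= 1 -> 0 <= g1 <= 1 ->
  a0 * g0 = a -> a1 * g1 = b -> 0 <= S t -> 0 < C t -> 0 <= x <= 1 ->
  Lop sg a0 a1 g0 g1 riccati_flow x t <= 0.
Proof.
  intros Hsg Hb Ha0 Ha1 Hg0 Hg1 Hag Hbg HSt HCt Hx.
  set (x0 := x + g0 * (1 - x)). set (x1 := x - g1 * x).
  assert (Hx0 : 0 <= x0 <= 1) by (unfold x0; nra).
  assert (Hx1 : 0 <= x1 <= 1) by (unfold x1; nra).
  assert (Hden : forall y, 0 <= y <= 1 -> 0 < riccati_den y t)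
    by (intros y Hy; apply riccati_den_pos; assumption).
  assert (HsgS : 0 <= sg * S t) by (apply Rmult_le_pos; assumption).
  pose proof (riccati_flow_convex x x0 t HsgS (Hden x Hx) (Hden x0 Hx0)) as Hconv0.
  pose proof (riccati_flow_convex x x1 t HsgS (Hden x Hx) (Hden x1 Hx1)) as Hconv1.
  assert (Hdt : d_t riccati_flow x t = riccati_rhs sg a b x / riccati_den x t ^ 2).
  { apply is_derive_unique, riccati_flow_dt. apply Rgt_not_eq, Hden, Hx. }
  assert (Hdx : d_x riccati_flow x t = / riccati_den x t ^ 2).
  { apply is_derive_unique, riccati_flow_dx. apply Rgt_not_eq, Hden, Hx. }
  assert (Hcancel : riccati_rhs sg a b x + sg * (1 - x) * x - a0 * (x0 - x) - a1 * (x1 - x) = 0).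
  { unfold riccati_rhs, x0, x1. rewrite <- Hag, <- Hbg. ring. }
  set (P := / riccati_den x t ^ 2).
  assert (HP : 0 < P) by (apply Rinv_0_lt_compat, pow_lt, Hden, Hx).
  unfold Lop, J0, J1. rewrite Hdt, Hdx. fold x0 x1 P.
  unfold Rdiv in Hconv0, Hconv1 |- *. fold P in Hconv0, Hconv1 |- *.
  assert (a0 * ((x0 - x) * P) <= a0 * (riccati_flow x0 t - riccati_flow x t))
    by (apply Rmult_le_compat_l; assumption).
  assert (a1 * ((x1 - x) * P) <= a1 * (riccati_flow x1 t - riccati_flow x t))
    by (apply Rmult_le_compat_l; assumption).
  assert (Hzero : riccati_rhs sg a b x * P + sg * (1 - x) * x * P
                  - a0 * ((x0 - x) * P) - a1 * ((x1 - x) * P) = 0).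
  { replace (riccati_rhs sg a b x * P + sg * (1 - x) * x * P
             - a0 * ((x0 - x) * P) - a1 * ((x1 - x) * P))
      with ((riccati_rhs sg a b x + sg * (1 - x) * x - a0 * (x0 - x) - a1 * (x1 - x)) * P)
      by ring.
    rewrite Hcancel. ring. }
  lra.
Qed.

End RiccatiFlow.

Lemma riccati_ode_unique sg a b (T : R) (y z : R -> R) : 0 <= T ->
  (forall t, 0 <= t <= T -> is_derive y t (riccati_rhs sg a b (y t))) ->
  (forall t, 0 <= t <= T -> is_derive z t (riccati_rhs sg a b (z t))) ->
  y 0 = z 0 -> y T = z T.
Proof.
  intros HT Hy Hz H0.
  destruct (Rle_lt_or_eq_dec 0 T HT) as [HT0|<-]; [|exact H0].
  set (k := fun t => sg * (y t + z t) - (sg + a + b)).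
  assert (Hrhs : forall t, riccati_rhs sg a b (y t) - riccati_rhs sg a b (z t) = k t * (y t - z t))
    by (intros t; unfold riccati_rhs, k; ring).
  destruct (continuity_ab_maj k 0 T HT) as [tK [HK _]].
  { intros t Ht. apply continuity_pt_filterlim.
    apply (continuous_minus (fun s => sg * (y s + z s)) (fun _ => sg + a + b));
      [|apply continuous_const].
    apply (continuous_mult (fun _ => sg) (fun s => y s + z s)); [apply continuous_const|].
    apply (continuous_plus y z); apply ex_derive_continuous; eexists; [apply Hy|apply Hz]; exact Ht. }
  set (K := k tK).
  (* [(y - z)^2 exp(-2 K t)] is nonincreasing because [k <= K] *)
  set (energy := fun t => (y t - z t) ^ 2 * exp (- (2 * K) * t)).
  set (denergy := fun t => 2 * (y t - z t) ^ 2 * (k t - K) * exp (- (2 * K) * t)).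
  assert (Hd : forall t, 0 <= t <= T -> derivable_pt_lim energy t (denergy t)).
  { intros t Ht. apply is_derive_Reals. unfold energy, denergy.
    specialize (Hy t Ht). specialize (Hz t Ht).
    auto_derive; [repeat split; eexists; eassumption|].
    replace (Derive (fun s => y s) t) with (riccati_rhs sg a b (y t))
      by (symmetry; apply is_derive_unique, Hy).
    replace (Derive (fun s => z s) t) with (riccati_rhs sg a b (z t))
      by (symmetry; apply is_derive_unique, Hz).
    replace (riccati_rhs sg a b (y t)) with (riccati_rhs sg a b (z t) + k t * (y t - z t))
      by (rewrite <- Hrhs; ring).
    ring. }
  destruct (MVT_cor2 energy denergy 0 T HT0 Hd) as [c [Hmvt Hc]].
  assert (Hdc : denergy c <= 0).
  { unfold denergy. specialize (HK c ltac:(lra)). fold K in HK.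
    assert (0 <= 2 * (y c - z c) ^ 2 * exp (- (2 * K) * c)).
    { pose proof (pow2_ge_0 (y c - z c)). pose proof (exp_pos (- (2 * K) * c)). nra. }
    nra. }
  assert (HE0 : energy 0 = 0) by (unfold energy; rewrite H0; ring).
  assert (HET : energy T <= 0) by nra.
  unfold energy in HET. pose proof (exp_pos (- (2 * K) * T)).
  assert ((y T - z T) ^ 2 <= 0) by nra.
  nra.
Qed.

Theorem proposition4p4 (f0 f1 l0 l1 g0 g1 : R)
  (hf0 : 0 < f0) (hf1 : 0 <= f1) (hsig : 0 < f0 - f1)
  (hl0 : 0 <= l0) (hl1 : 0 <= l1)
  (hg0 : 0 < g0 <= 1) (hg1 : 0 < g1 <= 1)
  (u X : R -> R -> R)
  (hu : solves_cauchy f0 f1 l0 l1 g0 g1 u)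
  (hX : solves_quasispecies f0 f1 l0 l1 g0 g1 X) :
  forall x t, 0 <= x <= 1 -> 0 <= t -> X x t <= u x t <= 1.
Proof.
  destruct hu as [Hreg [Hpde Hinit]].
  set (sg := f0 - f1). set (a := l0 * g0 * f0). set (b := l1 * g1 * f1).
  assert (Hsg : 0 <= sg) by (unfold sg; lra).
  assert (Ha : 0 <= a) by (unfold a; repeat apply Rmult_le_pos; lra).
  assert (Hb : 0 <= b) by (unfold b; repeat apply Rmult_le_pos; lra).
  assert (HLu : forall x t, 0 <= x <= 1 -> 0 < t -> Lop sg (l0 * f0) (l1 * f1) g0 g1 u x t = 0).
  { intros x t Hx Ht. specialize (Hpde x t Hx Ht). unfold Lop, sg. lra. }
  destruct (hyperbolic_pair_exists (riccati_disc sg a b))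
    as [C [S [HC0 [HS0 [HC [HS [Hdet Hpos]]]]]]]; [apply riccati_disc_nonneg; assumption|].
  assert (Hden : forall x t, 0 <= x <= 1 -> 0 <= t -> riccati_den sg a b C S x t <> 0).
  { intros x t Hx Ht. destruct (Hpos t Ht). apply Rgt_not_eq, riccati_den_pos; assumption. }
  intros x t Hx Ht.
  assert (HX : X x t = riccati_flow sg a b C S x t).
  { destruct (hX x Hx) as [HX0 HXd].
    apply (riccati_ode_unique sg a b t); [exact Ht| | |].
    - intros s Hs. apply HXd, Hs.
    - intros s Hs. apply (riccati_flow_solves sg a b C S HC HS Hdet), Hden; [exact Hx|apply Hs].
    - rewrite HX0, riccati_flow_initial; trivial. }
  assert (Hcoef : 0 <= l0 * f0 /\ 0 <= l1 * f1) by (split; apply Rmult_le_pos; lra).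
  rewrite HX. split.
  - apply (comparison_principle sg (l0 * f0) (l1 * f1) g0 g1); try tauto; try lra.
    + apply riccati_flow_strip_regular; assumption.
    + apply strip_regular_of_C1, Hreg.
    + intros y s Hy Hs. rewrite HLu by assumption. destruct (Hpos s ltac:(lra)).
      apply Lop_riccati_flow_nonpos; try tauto; try lra; unfold a, b; ring.
    + intros y Hy. rewrite riccati_flow_initial, Hinit; trivial. lra.
  - apply (comparison_principle sg (l0 * f0) (l1 * f1) g0 g1 u (fun _ _ => 1)); try tauto; try lra.
    + apply strip_regular_of_C1, Hreg.
    + intros y s Hy Hs. split; [apply continuous_const|]. split; apply ex_derive_const.
    + intros y s Hy Hs. rewrite HLu, Lop_const by assumption. lra.
    + intros y Hy. rewrite Hinit; trivial. lra.
Qed.
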